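(* Let $(A,B)$ be stabilizable and let $K\in\mathbb{R}^{m\times n}$ be a stabilizing gain. With $\hat B_x$, $\hat B_u$ as in the context (with quadratic relaxing function) for a given $\delta>0$, let $\hat B_K(x)=\hat B_x(x)+\hat B_u(Kx)$. Then $$\hat B_K(x)\le x^\top\big(M_x+K^\top M_uK\big)x\quad\text{for all }x\in\mathbb{R}^n,$$ where $M_x=\frac{1}{2\delta^2}C_x^\top\mathrm{diag}(\mathbf 1+w_x)C_x$ and $M_u=\frac{1}{2\delta^2}C_u^\top\mathrm{diag}(\mathbf 1+w_u)C_u$, with $w_x,w_u$ the weighting vectors in the weight recentered case and $w_x=0$, $w_u=0$ in the gradient recentered case.
   Context: Polytopes $\mathcal{X}=\{x\in\mathbb{R}^n:C_xx\le d_x\}$, $\mathcal{U}=\{u\in\mathbb{R}^m:C_uu\le d_u\}$ (compact), $C_x\in\mathbb{R}^{q_x\times n}$, $C_u\in\mathbb{R}^{q_u\times m}$, $d_x,d_u$ entrywise strictly positive; $C^i$ row $i$, $d^i$ entry $i$; $\mathbf 1$ is the all-ones vector. Quadratic relaxed barrier: for $\delta>0$ let $\beta_2(z;\delta)=\frac12\big[\big(\frac{z-2\delta}{\delta}\big)^2-1\big]-\ln\delta$ and $\hat B(z)=-\ln z$ for $z>\delta$, $\hat B(z)=\beta_2(z;\delta)$ for $z\le\delta$. With $z_x^i(x)=-C_x^ix+d_x^i$, $\hat B_x(x)=\sum_i\hat B_{x,i}(x)$ where either $\hat B_{x,i}(x)=\hat B(z_x^i(x))+\ln d_x^i-C_x^ix/d_x^i$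 for all $i$ (gradient recentering) or $\hat B_{x,i}(x)=(1+w_x^i)(\hat B(z_x^i(x))+\ln d_x^i)$ with $w_x\in\mathbb{R}^{q_x}$, $w_x\ge0$, $\sum_i(1+w_x^i)(C_x^i)^\top/d_x^i=0$ (weight recentering); $\hat B_u$ analogously from $C_u,d_u,w_u$. $\delta$ is such that $\hat B_x(0)=\hat B_u(0)=0$ and $\nabla\hat B_x(0)=\nabla\hat B_u(0)=0$. *)

From HB Require Import structures.
From mathcomp Require Import all_boot all_order all_algebra.
From mathcomp Require Import all_classical all_reals all_analysis.
Set Implicit Arguments. Unset Strict Implicit. Unset Printing Implicit Defensive.
Import Order.TTheory GRing.Theory Num.Theory.
Import numFieldNormedType.Exports.
Local Open Scope ring_scope.
Local Open Scope classical_set_scope.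

Section Barrier.
Variable R : realType.

Definition beta2 (delta z : R) : R :=
  ((((z - 2 * delta) / delta) ^+ 2 - 1) / 2) - ln delta.

Definition Bhat (delta z : R) : R :=
  if delta < z then - ln z else beta2 delta z.

Definition polytope (q k : nat) (C : 'M[R]_(q, k)) (d : 'cV[R]_q) : set 'cV[R]_k :=
  [set y | forall i, (C *m y) i 0 <= d i 0].

Definition zfun (q k : nat) (C : 'M[R]_(q, k)) (d : 'cV[R]_q) (y : 'cV[R]_k) (i : 'I_q) : R :=
  - (C *m y) i 0 + d i 0.

Definition B_grad (q k : nat) (delta : R) (C : 'M[R]_(q, k)) (d : 'cV[R]_q)
  (y : 'cV[R]_k) : R :=
  \sum_(i < q) (Bhat delta (zfun C d y i) + ln (d i 0) - (C *m y) i 0 / d i 0).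

Definition B_weight (q k : nat) (delta : R) (C : 'M[R]_(q, k)) (d : 'cV[R]_q)
  (w : 'cV[R]_q) (y : 'cV[R]_k) : R :=
  \sum_(i < q) ((1 + w i 0) * (Bhat delta (zfun C d y i) + ln (d i 0))).

Definition Bhat_rec (grad : bool) (q k : nat) (delta : R) (C : 'M[R]_(q, k))
  (d : 'cV[R]_q) (w : 'cV[R]_q) (y : 'cV[R]_k) : R :=
  if grad then B_grad delta C d y else B_weight delta C d w y.

Definition weight_ok (q k : nat) (C : 'M[R]_(q, k)) (d : 'cV[R]_q) (w : 'cV[R]_q) : Prop :=
  (forall i, 0 <= w i 0) /\
  \sum_(i < q) (((1 + w i 0) / d i 0) *: (row i C)^T) = 0.

Definition wvec (grad : bool) (q : nat) (w : 'cV[R]_q) : 'cV[R]_q :=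
  if grad then 0 else w.

Definition Mmat (q k : nat) (delta : R) (C : 'M[R]_(q, k)) (w : 'cV[R]_q) : 'M[R]_k :=
  (2 * delta ^+ 2)^-1 *: (C^T *m diag_mx (const_mx 1 + w^T) *m C).

Definition schur_stable (n : nat) (M : 'M[R]_n) : Prop :=
  (fun k : nat => iter k (mulmx M) 1%:M) @ \oo --> (0 : 'M[R]_n).

Definition stabilizing (n m : nat) (A : 'M[R]_n) (B : 'M[R]_(n, m)) (K : 'M[R]_(m, n)) : Prop :=
  schur_stable (A + B *m K).

Definition stabilizable (n m : nat) (A : 'M[R]_n) (B : 'M[R]_(n, m)) : Prop :=
  exists K : 'M[R]_(m, n), stabilizing A B K.

End Barrier.

From HB Require Import structures.
From mathcomp Require Import all_boot all_order all_algebra.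
From mathcomp Require Import all_classical all_reals all_analysis.
From mathcomp Require Import ring lra.
Import Order.TTheory GRing.Theory Num.Theory.
Import numFieldNormedType.Exports.
Set Implicit Arguments. Unset Strict Implicit. Unset Printing Implicit Defensive.
Local Open Scope ring_scope.
Local Open Scope classical_set_scope.

(* Both barriers are sums over constraints of (1 + w_i) * T(d_i, z_i), with
   T(d, z) = B(z) + ln d + (z - d)/d: in the gradient recentered case this is the
   definition, in the weight recentered case the added linear terms sum to zero by
   the weight condition. The normalization B(0) = 0 reads sum_i (1 + w_i) T(d_i, d_i)
   = 0 with every T(d_i, d_i) <= 0 and T(d, d) < 0 when d < delta, so delta <= d_i.
   Under that condition T(d, z) <= (z - d)^2 / (2 delta^2): for z >= delta the gap
   is a function of z decreasing then increasing around z = d, and for z <= delta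
   the gap is affine in z with nonnegative slope. Summing, with z_i - d_i = -(C y)_i,
   gives the quadratic form of M, which is applied at x and at K x. *)

Section RecenteredBarrierBound.
Variable R : realType.

Lemma is_derive_MVT (f df : R -> R) (a b : R) : a < b ->
  (forall x, a <= x <= b -> is_derive x 1 f (df x)) ->
  exists2 c, a < c < b & f b - f a = df c * (b - a).
Proof.
move=> ab fd.
have fd_in x : x \in `]a, b[%R -> is_derive x 1 f (df x).
  by rewrite in_itv /= => /andP[ax xb]; apply: fd; rewrite !ltW.
have fcont : {within `[a, b], continuous f}.
  apply: derivable_within_continuous => x; rewrite in_itv /= => xab.
  have := fd x xab => fdx; exact: ex_derive.
by have [c] := MVT ab fd_in fcont; rewrite in_itv /=; exists c.
Qed.

Lemma le_center_of_derive_sign (f df : R -> R) (a p z : R) : a <= p -> a <= z ->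
  (forall x, a <= x -> is_derive x 1 f (df x)) ->
  (forall x, a <= x -> 0 <= (x - p) * df x) ->
  f p <= f z.
Proof.
move=> ap az fd dfs.
have fd_seg u v : a <= u -> forall x, u <= x <= v -> is_derive x 1 f (df x).
  by move=> au x /andP[ux _]; apply: fd; apply: le_trans ux.
case: (ltgtP z p) => [zp|pz|-> //].
- have [c /andP[zc cp] E] := is_derive_MVT zp (fd_seg z p az).
  have := dfs c (le_trans az (ltW zc)); rewrite nmulr_rge0 ?subr_lt0 // => dfc.
  by rewrite -subr_le0 E mulr_le0_ge0 // subr_ge0 ltW.
- have [c /andP[pc cz] E] := is_derive_MVT pz (fd_seg p z ap).
  have := dfs c (le_trans ap (ltW pc)); rewrite pmulr_rge0 ?subr_gt0 // => dfc.
  by rewrite -subr_ge0 E mulr_ge0 // subr_ge0 ltW.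
Qed.

Lemma is_derive_ln_quadratic (k a b x : R) : 0 < x ->
  is_derive x 1 (fun t : R => k * ln t + (a * t + b * t ^+ 2)) (k / x + (a + 2 * b * x)).
Proof.
move=> x0.
have -> : (fun t : R => k * ln t + (a * t + b * t ^+ 2)) =
    (k \*: (@ln R)) + horner (a *: 'X + b *: 'X^2).
  by apply/funext => t; rewrite !fctE !hornerE.
have quad_deriv : is_derive x 1 (horner (a *: 'X + b *: 'X^2)) (a + 2 * b * x).
  have := is_derive_poly (a *: 'X + b *: 'X^2) x => poly_deriv.
  apply: (is_derive_eq poly_deriv).
  rewrite derivD !derivZ derivX derivXn !hornerE /=; ring.
apply: is_derive_eq; first exact: (is_deriveD (is_deriveZ k (is_derive1_ln x0)) quad_deriv).
by rewrite mulrC.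
Qed.

Lemma ln_recentered_le_quadratic (dl d z : R) : 0 < dl -> dl <= d -> dl <= z ->
  - ln z + ln d + (z - d) / d <= (z - d) ^+ 2 / (2 * dl ^+ 2).
Proof.
move=> dl0 dld dlz.
pose a := - (d^-1 + d / dl ^+ 2); pose b := (2 * dl ^+ 2)^-1.
pose g := fun t : R => 1 * ln t + (a * t + b * t ^+ 2).
have g_sign t : dl <= t -> 0 <= (t - d) * (1 / t + (a + 2 * b * t)).
  move=> dlt.
  have -> : (t - d) * (1 / t + (a + 2 * b * t)) =
      (t - d) ^+ 2 * (t * d - dl ^+ 2) / (t * d * dl ^+ 2).
    rewrite /a /b; field; lra.
  have dl2_le : dl ^+ 2 <= t * d by rewrite expr2 ler_pM // ltW.
  apply: divr_ge0; first by rewrite mulr_ge0 ?sqr_ge0 ?subr_ge0.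
  by rewrite !mulr_ge0 ?sqr_ge0 //; lra.
rewrite -subr_ge0.
suff -> : (z - d) ^+ 2 / (2 * dl ^+ 2) - (- ln z + ln d + (z - d) / d) = g z - g d.
  rewrite subr_ge0; apply: le_center_of_derive_sign dld dlz _ g_sign => t dlt.
  exact: is_derive_ln_quadratic (lt_le_trans dl0 dlt).
rewrite /g /a /b; field; lra.
Qed.

Definition barrier_term (dl d z : R) := Bhat dl z + ln d + (z - d) / d.

Lemma barrier_term_le_quadratic (dl d z : R) : 0 < dl -> dl <= d ->
  barrier_term dl d z <= (z - d) ^+ 2 / (2 * dl ^+ 2).
Proof.
move=> dl0 dld; rewrite /barrier_term /Bhat.
case: ltP => [dlz|zdl]; first exact: ln_recentered_le_quadratic (ltW dlz).
have at_dl := ln_recentered_le_quadratic dl0 dld (lexx dl).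
rewrite -subr_le0.
(* beta2 and the bound share their leading coefficient, so the gap is affine in z *)
have -> : beta2 dl z + ln d + (z - d) / d - (z - d) ^+ 2 / (2 * dl ^+ 2) =
  (- ln dl + ln d + (dl - d) / d - (dl - d) ^+ 2 / (2 * dl ^+ 2))
   + (z - dl) * ((d - dl) ^+ 2 / (dl ^+ 2 * d)).
  rewrite /beta2; field; lra.
have : (z - dl) * ((d - dl) ^+ 2 / (dl ^+ 2 * d)) <= 0.
  rewrite mulr_le0_ge0 ?subr_le0 // divr_ge0 ?sqr_ge0 // mulr_ge0 ?sqr_ge0 //.
  lra.
lra.
Qed.

Lemma barrier_term_center_lt0 (dl d : R) : 0 < d -> d < dl -> barrier_term dl d d < 0.
Proof.
move=> d0 ddl; rewrite /barrier_term /Bhat.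
have -> : (dl < d) = false by rewrite ltNge ltW.
rewrite subrr mul0r addr0.
pose a := - (2 / dl); pose b := (2 * dl ^+ 2)^-1.
have h_deriv t : d <= t <= dl ->
    is_derive t 1 (fun t => 1 * ln t + (a * t + b * t ^+ 2)) (1 / t + (a + 2 * b * t)).
  by case/andP=> dt _; apply: is_derive_ln_quadratic; apply: lt_le_trans dt.
have [c /andP[dc cdl] E] := is_derive_MVT ddl h_deriv.
have -> : beta2 dl d + ln d =
    - ((1 * ln dl + (a * dl + b * dl ^+ 2)) - (1 * ln d + (a * d + b * d ^+ 2))).
  rewrite /beta2 /a /b; field; lra.
rewrite E oppr_lt0 mulr_gt0 ?subr_gt0 //.
have -> : 1 / c + (a + 2 * b * c) = (dl - c) ^+ 2 / (c * dl ^+ 2).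
  rewrite /a /b; field; lra.
by rewrite divr_gt0 ?exprn_gt0 ?mulr_gt0 ?subr_gt0 //; lra.
Qed.

Lemma barrier_term_center_le0 (dl d : R) : 0 < dl -> 0 < d -> barrier_term dl d d <= 0.
Proof.
move=> dl0 d0; case: (ltgtP d dl) => [ddl|dld|->].
- exact/ltW/barrier_term_center_lt0.
- by rewrite /barrier_term /Bhat dld subrr mul0r addr0 addNr.
- rewrite /barrier_term /Bhat ltxx /beta2 subrr mul0r addr0.
  have -> : (dl - 2 * dl) / dl = -1 by field; lra.
  by rewrite sqrrN expr1n subrr mul0r; lra.
Qed.

Lemma Mmat_quadratic_form (q k : nat) (dl : R) (C : 'M[R]_(q, k)) (w : 'cV[R]_q)
    (y : 'cV[R]_k) :
  (y^T *m Mmat dl C w *m y) 0 0 =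
  \sum_(i < q) (1 + w i 0) * ((C *m y) i 0) ^+ 2 / (2 * dl ^+ 2).
Proof.
rewrite /Mmat -scalemxAr -scalemxAl [in LHS]mxE.
have -> : y^T *m (C^T *m diag_mx (const_mx 1 + w^T) *m C) *m y =
    (C *m y)^T *m diag_mx (const_mx 1 + w^T) *m (C *m y).
  by rewrite trmx_mul !mulmxA.
rewrite mxE mulr_sumr; apply: eq_bigr => i _.
by rewrite mul_mx_diag !mxE; ring.
Qed.

Section Polytope.
Variables (q k : nat) (C : 'M[R]_(q, k)) (d w : 'cV[R]_q).

Lemma weight_ok_linear_sum (y : 'cV[R]_k) : weight_ok C d w ->
  \sum_(i < q) (1 + w i 0) / d i 0 * (C *m y) i 0 = 0.
Proof.
move=> [_ /(congr1 (fun v : 'cV[R]_k => (v^T *m y) 0 0))].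
rewrite trmx0 mul0mx [X in _ = X -> _]mxE => E; rewrite -[RHS]E.
rewrite raddf_sum mulmx_suml summxE; apply: eq_bigr => i _.
by rewrite /= linearZ /= trmxK -scalemxAl -row_mul !mxE.
Qed.

Lemma wvec_ge0 (g : bool) : (g = false -> weight_ok C d w) -> forall i, 0 <= wvec g w i 0.
Proof. by case: g => [_ i|/(_ erefl) [w_ge0 _]]; rewrite /= ?mxE. Qed.

Lemma zfun0 i : zfun C d 0 i = d i 0.
Proof. by rewrite /zfun mulmx0 mxE oppr0 add0r. Qed.

Lemma Bhat_rec_sum_barrier_term (g : bool) (dl : R) (y : 'cV[R]_k) :
  (g = false -> weight_ok C d w) ->
  Bhat_rec g dl C d w y = \sum_(i < q) (1 + wvec g w i 0) * barrier_term dl (d i 0) (zfun C d y i).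
Proof.
have zfun_sub i : zfun C d y i - d i 0 = - (C *m y) i 0 by rewrite /zfun addrK.
case: g => hw; rewrite /Bhat_rec /wvec.
  apply: eq_bigr => i _.
  by rewrite [X in 1 + X]mxE addr0 mul1r /barrier_term zfun_sub mulNr.
rewrite /B_weight -[LHS]subr0 -[X in _ - X](weight_ok_linear_sum y (hw erefl)) -sumrB.
by apply: eq_bigr => i _; rewrite /barrier_term zfun_sub; ring.
Qed.

Lemma Bhat_rec0_delta_le_rhs (g : bool) (dl : R) : 0 < dl -> (forall i, 0 < d i 0) ->
  (g = false -> weight_ok C d w) -> Bhat_rec g dl C d w 0 = 0 ->
  forall i, dl <= d i 0.
Proof.
move=> dl0 d_gt0 hw; rewrite Bhat_rec_sum_barrier_term // => B0 i.
have term_ge0 j : 0 <= - ((1 + wvec g w j 0) * barrier_term dl (d j 0) (zfun C d 0 j)).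
  rewrite oppr_ge0 zfun0 mulr_ge0_le0 ?barrier_term_center_le0 //.
  by rewrite addr_ge0 ?wvec_ge0.
have sum0 : \sum_(j < q) - ((1 + wvec g w j 0) * barrier_term dl (d j 0) (zfun C d 0 j)) = 0.
  by rewrite sumrN B0 oppr0.
have /eqP := @psumr_eq0P _ _ xpredT _ (fun j _ => term_ge0 j) sum0 i isT.
rewrite oppr_eq0 mulf_eq0 zfun0 => /orP[/eqP|/eqP center0].
  by have := wvec_ge0 hw i; lra.
rewrite leNgt; apply/negP => /(barrier_term_center_lt0 (d_gt0 i)).
by rewrite center0 lt_irreflexive.
Qed.

Lemma Bhat_rec_le_quadratic (g : bool) (dl : R) (y : 'cV[R]_k) :
  0 < dl -> (forall i, 0 < d i 0) -> (g = false -> weight_ok C d w) ->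
  Bhat_rec g dl C d w 0 = 0 ->
  Bhat_rec g dl C d w y <= (y^T *m Mmat dl C (wvec g w) *m y) 0 0.
Proof.
move=> dl0 d_gt0 hw B0.
have dl_le := Bhat_rec0_delta_le_rhs dl0 d_gt0 hw B0.
rewrite (Bhat_rec_sum_barrier_term dl y hw) Mmat_quadratic_form; apply: ler_sum => i _.
rewrite -mulrA ler_wpM2l ?addr_ge0 ?wvec_ge0 //.
have -> : (C *m y) i 0 = - (zfun C d y i - d i 0) by rewrite /zfun; ring.
by rewrite sqrrN barrier_term_le_quadratic.
Qed.

End Polytope.
End RecenteredBarrierBound.

Theorem lemma3 (R : realType) (n m qx qu : nat)
  (A : 'M[R]_n) (B : 'M[R]_(n, m)) (K : 'M[R]_(m, n))
  (Cx : 'M[R]_(qx, n)) (dx : 'cV[R]_qx) (Cu : 'M[R]_(qu, m)) (du : 'cV[R]_qu)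
  (wx : 'cV[R]_qx) (wu : 'cV[R]_qu) (gx gu : bool) (delta : R) :
  stabilizable A B -> stabilizing A B K ->
  compact (polytope Cx dx) -> compact (polytope Cu du) ->
  (forall i, 0 < dx i 0) -> (forall i, 0 < du i 0) ->
  0 < delta ->
  (gx = false -> weight_ok Cx dx wx) ->
  (gu = false -> weight_ok Cu du wu) ->
  Bhat_rec gx delta Cx dx wx 0 = 0 ->
  Bhat_rec gu delta Cu du wu 0 = 0 ->
  (forall v : 'cV[R]_n, derivable (Bhat_rec gx delta Cx dx wx) 0 v /\
                        'D_v (Bhat_rec gx delta Cx dx wx) 0 = 0) ->
  (forall v : 'cV[R]_m, derivable (Bhat_rec gu delta Cu du wu) 0 v /\
                        'D_v (Bhat_rec gu delta Cu du wu) 0 = 0) ->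
  forall x : 'cV[R]_n,
    Bhat_rec gx delta Cx dx wx x + Bhat_rec gu delta Cu du wu (K *m x)
    <= (x^T *m (Mmat delta Cx (wvec gx wx)
                + K^T *m Mmat delta Cu (wvec gu wu) *m K) *m x) 0 0.
Proof.
move=> _ _ _ _ dx_gt0 du_gt0 delta_gt0 hwx hwu Bx0 Bu0 _ _ x.
rewrite mulmxDr mulmxDl mxE.
have -> : x^T *m (K^T *m Mmat delta Cu (wvec gu wu) *m K) *m x =
    (K *m x)^T *m Mmat delta Cu (wvec gu wu) *m (K *m x).
  by rewrite trmx_mul !mulmxA.
by apply: lerD; apply: Bhat_rec_le_quadratic.
Qed.
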